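(* Let $A\in\mathbb{R}^{n\times n}$, $B\in\mathbb{R}^{n\times m}$, $C\in\mathbb{R}^{p\times n}$, $D\in\mathbb{R}^{p\times m}$ define the discrete-time LTI system $x(t+1)=Ax(t)+Bu(t)$, $y(t)=Cx(t)+Du(t)$, and let $\mathscr{B}$ denote its behaviour. Assume that this input/output/state representation is minimal (so $n=\mathbf{n}(\mathscr{B})$) and that $\mathscr{B}$ is controllable. Let $N,T_{\mathrm{ini}},T\in\mathbb{Z}_{>0}$ with $T_{\mathrm{ini}}\ge \boldsymbol{\ell}(\mathscr{B})$ and $T\ge (m+1)(T_{\mathrm{ini}}+N+\mathbf{n}(\mathscr{B}))-1$. Let $\mathrm{col}(u_{\mathrm{ini}},y_{\mathrm{ini}})\in\mathscr{B}_{T_{\mathrm{ini}}}$ be the $T_{\mathrm{ini}}$ most recent input/output measurements of the system. Let $\mathrm{col}(u^{\mathrm d},y^{\mathrm d})\in\mathscr{B}_T$ be input/output data of the system with $u^{\mathrm d}$ persistently exciting of order $T_{\mathrm{ini}}+N+\mathbf{n}(\mathscr{B})$, and let $U_{\mathrm p},U_{\mathrm f},Y_{\mathrm p},Y_{\mathrm f}$ be built from this data as described in the context. Let $\mathcal{U}\subseteq\mathbb{R}^m$, $\mathcal{Y}\subseteq\mathbb{R}^p$. Then there exists a state estimate $\hat x(t)\in\mathbb{R}^n$ such that the feasible set of the MPC problem $$\text{(MPC)}\quad x_{k+1}=Ax_k+Bu_k,\; y_k=Cx_k+Du_k\ (k=0,\dots,N-1),\; x_0=\hat x(t),\; u_k\in\mathcal{U},\;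 y_k\in\mathcal{Y}\ (k=0,\dots,N-1)$$ in the decision variables $u=(u_0,\dots,u_{N-1})$, $x=(x_0,\dots,x_N)$, $y=(y_0,\dots,y_{N-1})$, is equal to the feasible set of the DeePC problem $$\text{(DeePC)}\quad \begin{pmatrix}U_{\mathrm p}\\ Y_{\mathrm p}\\ U_{\mathrm f}\\ Y_{\mathrm f}\end{pmatrix} g=\begin{pmatrix}u_{\mathrm{ini}}\\ y_{\mathrm{ini}}\\ u\\ y\end{pmatrix},\; u_k\in\mathcal{U},\; y_k\in\mathcal{Y}\ (k=0,\dots,N-1)$$ in the decision variables $g\in\mathbb{R}^{T-T_{\mathrm{ini}}-N+1}$, $u\in\mathbb{R}^{Nm}$, $y\in\mathbb{R}^{Np}$, where the feasible sets are compared as sets of pairs $(u,y)\in\mathcal{U}^N\times\mathcal{Y}^N$.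
   Context: Behaviour: for the system above, $\mathscr{B}=\{\mathrm{col}(u,y)\in(\mathbb{R}^{m+p})^{\mathbb{Z}_{\ge0}}:\exists x\in(\mathbb{R}^n)^{\mathbb{Z}_{\ge0}},\ x(t+1)=Ax(t)+Bu(t),\ y(t)=Cx(t)+Du(t)\}$. For $T\in\mathbb{Z}_{>0}$, $\mathscr{B}_T$ is the set of length-$T$ windows $(w_1,\dots,w_T)$ of trajectories $w\in\mathscr{B}$; elements are written $\mathrm{col}(u,y)$ with $u$ the stacked inputs and $y$ the stacked outputs. $\mathbf{n}(\mathscr{B})$ is the smallest state dimension of an input/output/state representation of $\mathscr{B}$ (a representation of this dimension is called minimal). The lag $\boldsymbol{\ell}(\mathscr{B})$ is the smallest $\ell\in\mathbb{Z}_{>0}$ such that $\mathrm{col}(C,CA,\dots,CA^{\ell-1})$ has rank $\mathbf{n}(\mathscr{B})$ (for a minimal representation). $\mathscr{B}$ is controllable if for every $T$, every $w^1\in\mathscr{B}_T$ and every $w^2\in\mathscr{B}$ there exist $w\in\mathscr{B}$ and $T'\in\mathbb{Z}_{>0}$ with $w_t=w^1_t$ for $1\le t\le T$ and $w_t=w^2_{t-T-T'}$ for $t>T+T'$. For a sequence $u=\mathrm{col}(u_1,\dots,u_T)\in\mathbb{R}^{Tm}$ and $L\le T$, the block Hankel matrix $\mathscr{H}_L(u)$ has block columns $\mathrm{col}(u_j,u_{j+1},\dots,u_{j+L-1})$, $j=1,\dots,T-L+1$; $u$ is persistently exciting of order $L$ if $\mathscr{H}_L(u)$ has full row rank. Data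 matrices: $\mathrm{col}(U_{\mathrm p},U_{\mathrm f})=\mathscr{H}_{T_{\mathrm{ini}}+N}(u^{\mathrm d})$ and $\mathrm{col}(Y_{\mathrm p},Y_{\mathrm f})=\mathscr{H}_{T_{\mathrm{ini}}+N}(y^{\mathrm d})$, where $U_{\mathrm p}$ (resp. $Y_{\mathrm p}$) consists of the first $T_{\mathrm{ini}}$ block rows and $U_{\mathrm f}$ (resp. $Y_{\mathrm f}$) of the last $N$ block rows. $\mathcal{U}^N$ denotes the $N$-fold Cartesian product of $\mathcal{U}$ (similarly $\mathcal{Y}^N$). *)

From HB Require Import structures.
From mathcomp Require Import all_boot all_order all_algebra.
From mathcomp Require Import reals.
Set Implicit Arguments. Unset Strict Implicit. Unset Printing Implicit Defensive.
Import Order.TTheory GRing.Theory Num.Theory.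
Local Open Scope ring_scope.

Section LTI.
Variable R : realType.

Definition behaviour {n m p : nat} (A : 'M[R]_n) (B : 'M[R]_(n, m))
    (C : 'M[R]_(p, n)) (D : 'M[R]_(p, m))
    (u : nat -> 'cV[R]_m) (y : nat -> 'cV[R]_p) : Prop :=
  exists x : nat -> 'cV[R]_n,
    forall t, x t.+1 = A *m x t + B *m u t /\ y t = C *m x t + D *m u t.

(* B_T : length-T windows (w(0),...,w(T-1)) of trajectories of B. *)
Definition in_window {n m p : nat} (A : 'M[R]_n) (B : 'M[R]_(n, m))
    (C : 'M[R]_(p, n)) (D : 'M[R]_(p, m)) (T : nat)
    (uw : 'I_T -> 'cV[R]_m) (yw : 'I_T -> 'cV[R]_p) : Prop :=
  exists u y, behaviour A B C D u y /\ forall t : 'I_T, uw t = u t /\ yw t = y t.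

(* The representation (A,B,C,D) is minimal: its state dimension n equals n(B),
   the smallest state dimension of any i/o/s representation of the same behaviour. *)
Definition minimal_repr {n m p : nat} (A : 'M[R]_n) (B : 'M[R]_(n, m))
    (C : 'M[R]_(p, n)) (D : 'M[R]_(p, m)) : Prop :=
  forall (n' : nat) (A' : 'M[R]_n') (B' : 'M[R]_(n', m))
         (C' : 'M[R]_(p, n')) (D' : 'M[R]_(p, m)),
    (forall u y, behaviour A' B' C' D' u y <-> behaviour A B C D u y) ->
    (n <= n')%N.

Definition controllable {n m p : nat} (A : 'M[R]_n) (B : 'M[R]_(n, m))
    (C : 'M[R]_(p, n)) (D : 'M[R]_(p, m)) : Prop :=
  forall (T : nat) (u1 : 'I_T -> 'cV[R]_m) (y1 : 'I_T -> 'cV[R]_p),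
    in_window A B C D u1 y1 ->
  forall u2 y2, behaviour A B C D u2 y2 ->
  exists u y (T' : nat), (0 < T')%N /\ behaviour A B C D u y /\
    (forall t : 'I_T, u t = u1 t /\ y t = y1 t) /\
    (forall t : nat, u (t + T + T')%N = u2 t /\ y (t + T + T')%N = y2 t).

Definition obsv_mx {n p : nat} (A : 'M[R]_n) (C : 'M[R]_(p, n)) (l : nat) :=
  \mxcol_(k < l) (C *m A ^+ k).

(* l is the lag: the smallest l > 0 with rank obsv_mx l = n (= n(B), the
   representation being minimal). *)
Definition is_lag {n p : nat} (A : 'M[R]_n) (C : 'M[R]_(p, n)) (l : nat) : Prop :=
  (0 < l)%N /\ \rank (obsv_mx A C l) = n /\
  forall l', (0 < l')%N -> (l' < l)%N -> \rank (obsv_mx A C l') <> n.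

Definition stack {k L : nat} (w : 'I_L -> 'cV[R]_k) : 'cV[R]_(L * k) :=
  (mxvec (\matrix_(i < L, a < k) w i a 0))^T.

(* Reading a finite sequence at a natural index (0 outside the range). *)
Definition at_nat {k T : nat} (w : 'I_T -> 'cV[R]_k) (t : nat) : 'cV[R]_k :=
  match insub t with Some i => w i | None => 0 end.

Definition hankel_rows {k T : nat} (w : 'I_T -> 'cV[R]_k) (s L ncols : nat)
  : 'M[R]_(L * k, ncols) :=
  \matrix_(r, j) (stack (fun i : 'I_L => at_nat w (s + i + j)%N)) r 0.

Definition hankel {k T : nat} (w : 'I_T -> 'cV[R]_k) (L : nat)
  : 'M[R]_(L * k, T.+1 - L) := hankel_rows w 0 L (T.+1 - L).

Definition persistently_exciting {k T : nat} (w : 'I_T -> 'cV[R]_k) (L : nat) :=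
  row_free (hankel w L).

Definition mpc_feasible {n m p : nat} (A : 'M[R]_n) (B : 'M[R]_(n, m))
    (C : 'M[R]_(p, n)) (D : 'M[R]_(p, m)) (N : nat)
    (Uset : 'cV[R]_m -> Prop) (Yset : 'cV[R]_p -> Prop) (xhat : 'cV[R]_n)
    (u : 'I_N -> 'cV[R]_m) (y : 'I_N -> 'cV[R]_p) : Prop :=
  exists x : nat -> 'cV[R]_n, x 0%N = xhat /\
    forall k : 'I_N, x k.+1 = A *m x k + B *m u k /\ y k = C *m x k + D *m u k
                     /\ Uset (u k) /\ Yset (y k).

Definition deepc_feasible {m p : nat} (T Tini N : nat)
    (ud : 'I_T -> 'cV[R]_m) (yd : 'I_T -> 'cV[R]_p)
    (uini : 'I_Tini -> 'cV[R]_m) (yini : 'I_Tini -> 'cV[R]_p)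
    (Uset : 'cV[R]_m -> Prop) (Yset : 'cV[R]_p -> Prop)
    (u : 'I_N -> 'cV[R]_m) (y : 'I_N -> 'cV[R]_p) : Prop :=
  let ncols := (T.+1 - (Tini + N))%N in
  exists g : 'cV[R]_ncols,
    hankel_rows ud 0 Tini ncols *m g = stack uini /\
    hankel_rows yd 0 Tini ncols *m g = stack yini /\
    hankel_rows ud Tini N ncols *m g = stack u /\
    hankel_rows yd Tini N ncols *m g = stack y /\
    forall k : 'I_N, Uset (u k) /\ Yset (y k).

End LTI.

From HB Require Import structures.
From mathcomp Require Import all_boot all_order all_algebra.
From mathcomp Require Import reals.
From mathcomp Require Import zify.
Import Order.TTheory GRing.Theory Num.Theory.
Local Open Scope ring_scope.
Set Implicit Arguments. Unset Strict Implicit. Unset Printing Implicit Defensive.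

(* Minimality makes (C, A) observable: the row space spanned by the C A^k is
   A-invariant by Cayley-Hamilton, and restricting the state to it gives a
   representation of the same behaviour whose dimension is its rank, so that rank is
   n. The lag bound then lets the first Tini samples determine the state, and
   controllability of the behaviour forces (A, B) to be reachable: steer from the
   zero state to the free response of an arbitrary x and read x back by
   observability. Willems' fundamental lemma (a left-kernel argument, again via
   Cayley-Hamilton) says that, the system being reachable and the data input
   persistently exciting of order Tini + N + n, every initial state together with
   every input of length Tini + N is produced by some combination g of the columns
   of the data Hankel matrices. Taking for xhat the current state, a feasible MPC
   trajectory is thus matched by a DeePC vector g whose past part reproduces
   (uini, yini); conversely any DeePC vector g gives a trajectory whose first Tini
   samples are (uini, yini), hence whose state at time Tini is xhat. *)

Section PowerRelations.
Variables (R : comNzRingType) (n : nat) (A : 'M[R]_n).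

Lemma char_poly_relation :
  exists al : nat -> R, al n = 1 /\ \sum_(k < n.+1) al k *: A ^+ k = 0.
Proof.
case: n A => [|n'] A'.
  by exists (fun _ => 1); split => //; apply/matrixP => [[]].
exists (fun k => (char_poly A')`_k); split.
  by have /monicP := char_poly_monic A'; rewrite lead_coefE size_char_poly.
have := Cayley_Hamilton A'.
rewrite -[X in horner_mx _ X]coefK poly_def size_char_poly linear_sum /= => CH.
by rewrite -[RHS]CH; apply: eq_bigr => i _; rewrite linearZ /= rmorphXn /= horner_mx_X.
Qed.

Lemma mulmx_pow_eq0 a b (P : 'M[R]_(a, n)) (Q : 'M[R]_(n, b)) :
  (forall i, (i < n)%N -> P *m A ^+ i *m Q = 0) -> forall i, P *m A ^+ i *m Q = 0.
Proof.
move=> Plt; have [al [al_n Hal]] := char_poly_relation.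
elim/ltn_ind => i IH; have [/Plt //|le_ni] := ltnP i n.
have : P *m A ^+ (i - n) *m (\sum_(k < n.+1) al k *: A ^+ k) *m Q = 0.
  by rewrite Hal mulmx0 mul0mx.
have powD j k : P *m A ^+ j *m A ^+ k = P *m A ^+ (j + k).
  by rewrite -mulmxA exprD.
rewrite mulmx_sumr mulmx_suml big_ord_recr /= al_n scale1r powD subnK // => <-.
rewrite big1 ?add0r // => k _.
by rewrite -scalemxAr powD -scalemxAl IH ?scaler0 //; have := ltn_ord k; lia.
Qed.

End PowerRelations.

Lemma row_free_solvable (F : fieldType) r c (M : 'M[F]_(r, c)) (b : 'cV[F]_r) :
  row_free M -> exists g, M *m g = b.
Proof.
move=> freeM; have fullMt : row_full M^T by rewrite /row_full mxrank_tr.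
have /submxP[h Hh] := submx_full b^T fullMt.
by exists h^T; rewrite -[M]trmxK -trmx_mul -Hh trmxK.
Qed.

Lemma mxrank_colP (F : fieldType) r c (M : 'M[F]_(r, c)) :
  \rank M = c <-> (forall z : 'cV[F]_c, M *m z = 0 -> z = 0).
Proof.
split=> [rkM z Mz0 | Mker].
  have freeMt : row_free M^T by rewrite /row_free mxrank_tr rkM.
  apply: trmx_inj; apply: (row_free_inj freeMt).
  by rewrite -trmx_mul Mz0 !trmx0 mul0mx.
rewrite -mxrank_tr; apply/eqP; apply: inj_row_free => v vMt0.
apply: trmx_inj; rewrite trmx0; apply: Mker.
by rewrite -[M]trmxK -trmx_mul vMt0 trmx0.
Qed.

Lemma rowv_eq0 (F : fieldType) n (xi : 'rV[F]_n) :
  (forall x : 'cV[F]_n, xi *m x = 0) -> xi = 0.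
Proof.
move=> xi_x; apply/rowP => a; have := xi_x (delta_mx a 0).
by rewrite -colE => /matrixP/(_ 0 0); rewrite !mxE.
Qed.

Section Stacking.
Variables (R : realType) (k : nat).

Lemma stackE L (w : 'I_L -> 'cV[R]_k) i a : stack w (mxvec_index i a) 0 = w i a 0.
Proof. by rewrite /stack mxE mxvecE mxE. Qed.

Lemma stack_inj L (w1 w2 : 'I_L -> 'cV[R]_k) : stack w1 = stack w2 -> w1 =1 w2.
Proof.
move=> /matrixP E i; apply/matrixP => a j; rewrite (ord1 j).
by have := E (mxvec_index i a) 0; rewrite !stackE.
Qed.

Lemma eq_stack L (w1 w2 : 'I_L -> 'cV[R]_k) : w1 =1 w2 -> stack w1 = stack w2.
Proof.
move=> E; apply/matrixP => r j; rewrite (ord1 j).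
by case/mxvec_indexP: r => i a; rewrite !stackE E.
Qed.

Lemma mul_vec_mx_stack L (E : 'rV[R]_(L * k)) (w : 'I_L -> 'cV[R]_k) :
  E *m stack w = \sum_i row i (vec_mx E) *m w i.
Proof.
apply/matrixP => r c; rewrite (ord1 r) (ord1 c) !mxE summxE.
rewrite (reindex _ (curry_mxvec_bij _ _)) /=.
under [RHS]eq_bigr do rewrite mxE.
by rewrite pair_bigA; apply: eq_bigr => -[i a] _; rewrite stackE !mxE.
Qed.

Definition stackmx L c (F : 'I_c -> 'I_L -> 'cV[R]_k) : 'M[R]_(L * k, c) :=
  \matrix_(r, j) stack (F j) r 0.

Lemma stackmx_mul L c (F : 'I_c -> 'I_L -> 'cV[R]_k) (g : 'cV[R]_c) :
  stackmx F *m g = stack (fun i => \sum_(j < c) g j 0 *: F j i).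
Proof.
apply/matrixP => r j; rewrite (ord1 j); case/mxvec_indexP: r => i a.
rewrite stackE !mxE summxE; apply: eq_bigr => j' _.
by rewrite mxE stackE !mxE mulrC.
Qed.

Lemma col_stackmx L c (F : 'I_c -> 'I_L -> 'cV[R]_k) j : col j (stackmx F) = stack (F j).
Proof. by apply/colP => r; rewrite !mxE. Qed.

Lemma mul_stackmx L c (F : 'I_c -> 'I_L -> 'cV[R]_k) (E : 'rV[R]_(L * k)) j :
  (E *m stackmx F) 0 j = (E *m stack (F j)) 0 0.
Proof. by rewrite !mxE; apply: eq_bigr => r _; rewrite mxE. Qed.

Lemma row_free_stackmx L c (F : 'I_c -> 'I_L -> 'cV[R]_k) :
  row_free (stackmx F) ->
  forall z : 'I_L -> 'rV[R]_k, (forall j, \sum_i z i *m F j i = 0) -> forall i, z i = 0.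
Proof.
move=> freeF z zF0 i; pose E := mxvec (\matrix_i z i).
have rowE i' : row i' (vec_mx E) = z i' by rewrite mxvecK rowK.
suff E0 : E = 0 by rewrite -rowE E0 linear0 row0.
apply: (row_free_inj freeF); rewrite mul0mx; apply/rowP => j.
rewrite mul_stackmx mul_vec_mx_stack; under eq_bigr do rewrite rowE.
by rewrite zF0 !mxE.
Qed.

End Stacking.

Section Observability.
Variables (R : fieldType) (n p : nat) (A : 'M[R]_n) (C : 'M[R]_(p, n)).

Definition observable_in l :=
  forall z : 'cV[R]_n, (forall k : 'I_l, C *m A ^+ k *m z = 0) -> z = 0.

Lemma observable_in_widen l l' : (l <= l')%N -> observable_in l -> observable_in l'.
Proof. by move=> le_ll' obs z Hz; apply: obs => k; apply: (Hz (widen_ord le_ll' k)). Qed.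

Definition obs_space l : 'M[R]_n := (\sum_(k < l) <<C *m A ^+ k>>)%MS.

Lemma obs_space_sub l (k : 'I_l) : (C *m A ^+ k <= obs_space l)%MS.
Proof. by apply: (sumsmx_sup k) => //; rewrite genmxE. Qed.

Lemma obs_space_mul_eq0 l (z : 'cV[R]_n) :
  obs_space l *m z = 0 <-> (forall k : 'I_l, C *m A ^+ k *m z = 0).
Proof.
split=> [Wz0 k | Hz].
  by have /submxP[E ->] := obs_space_sub k; rewrite -mulmxA Wz0 mulmx0.
have /sub_sumsmxP[v ->] : (obs_space l <= obs_space l)%MS by [].
rewrite mulmx_suml big1 // => k _.
have /submxP[E ->] : (<<C *m A ^+ k>> <= C *m A ^+ k)%MS by rewrite genmxE.
by rewrite -!mulmxA (mulmxA C) Hz !mulmx0.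
Qed.

Lemma obs_space_invariant :
  (C <= obs_space n)%MS /\ (obs_space n *m A <= obs_space n)%MS.
Proof.
set W := obs_space n.
have W_ann i : C *m A ^+ i *m cokermx W = 0.
  apply: mulmx_pow_eq0 => {}i lt_in; apply/eqP; rewrite -submxE.
  exact: (obs_space_sub (Ordinal lt_in)).
split; first by have /eqP := W_ann 0%N; rewrite expr0 mulmx1 -submxE.
rewrite /W /obs_space sumsmxMr_gen; apply/sumsmx_subP => k _.
have sub_gen : (<<C *m A ^+ k>> <= C *m A ^+ k)%MS by rewrite genmxE.
rewrite genmxE; apply: submx_trans (submxMr A sub_gen) _.
rewrite submxE -(mulmxA C) -[A ^+ k *m A]/(A ^+ k * A) -exprSr.
exact/eqP/W_ann.
Qed.

End Observability.

Section Minimality.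
Variables (R : realType) (n m p : nat).
Variables (A : 'M[R]_n) (B : 'M[R]_(n, m)) (C : 'M[R]_(p, n)) (D : 'M[R]_(p, m)).

Lemma rank_obsv_mxP l : \rank (obsv_mx A C l) = n <-> observable_in A C l.
Proof.
have obsv_mul_eq0 (z : 'cV[R]_n) :
    obsv_mx A C l *m z = 0 <-> (forall k : 'I_l, C *m A ^+ k *m z = 0).
  rewrite /obsv_mx mxcol_mul -(@mxcol0 R l (fun _ => p) 1).
  by split=> [/eq_mxcolP | Hz]; last apply/eq_mxcolP.
by rewrite mxrank_colP; split=> obs z Hz; apply: obs; apply/obsv_mul_eq0.
Qed.

Lemma behaviour_restrict r (S : 'M[R]_(r, n)) :
  row_free S -> (C <= S)%MS -> (S *m A <= S)%MS ->
  forall u y, behaviour (S *m A *m pinvmx S) (S *m B) (C *m pinvmx S) D u y <->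
              behaviour A B C D u y.
Proof.
move=> freeS CS AS u y.
set A' := S *m A *m pinvmx S; set C' := C *m pinvmx S.
have AS' : A' *m S = S *m A := mulmxKpV AS.
have CS' : C' *m S = C := mulmxKpV CS.
have [Sr SSr] := row_freeP freeS.
split=> [[x' Hx'] | [x Hx]].
  pose x := fix x t := if t is t'.+1 then A *m x t' + B *m u t' else Sr *m x' 0%N.
  have Sx t : S *m x t = x' t.
    elim: t => [|t IH]; first by rewrite /= mulmxA SSr mul1mx.
    by rewrite /= (Hx' t).1 mulmxDr !mulmxA -AS' -mulmxA IH.
  by exists x => t; split; rewrite // (Hx' t).2 -Sx mulmxA CS'.
exists (fun t => S *m x t) => t; split.
  by rewrite (Hx t).1 mulmxDr !mulmxA AS'.
by rewrite (Hx t).2 mulmxA CS'.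
Qed.

Lemma minimal_observable : minimal_repr A B C D -> observable_in A C n.
Proof.
move=> Hmin; have [CW AW] := obs_space_invariant A C.
set W := obs_space A C n in CW AW *.
have CS : (C <= row_base W)%MS by rewrite eq_row_base.
have AS : (row_base W *m A <= row_base W)%MS.
  have SW : (row_base W <= W)%MS by rewrite eq_row_base.
  by apply: submx_trans (submxMr A SW) _; rewrite eq_row_base.
have le_n_rk := Hmin _ _ _ _ D (behaviour_restrict (row_base_free W) CS AS).
have rkW : \rank W = n by apply/eqP; rewrite eqn_leq rank_leq_col le_n_rk.
by move=> z Hz; apply: (proj1 (mxrank_colP W) rkW); apply/obs_space_mul_eq0.
Qed.

Lemma lag_observable Tini :
  minimal_repr A B C D -> (forall l, is_lag A C l -> (l <= Tini)%N) ->
  observable_in A C Tini.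
Proof.
move=> Hmin lag_le.
have obs_n1 := observable_in_widen (leqnSn n) (minimal_observable Hmin).
pose P l := (0 < l)%N && (\rank (obsv_mx A C l) == n).
have P_n1 : P n.+1 by rewrite /P; apply/eqP/rank_obsv_mxP.
case: (ex_minnP (ex_intro P _ P_n1)) => l /andP[l_gt0 /eqP rk_l] l_min.
apply: (observable_in_widen _ (proj1 (rank_obsv_mxP l) rk_l)); apply: lag_le.
split=> //; split=> // l' l'_gt0 lt_l'l rk_l'.
by have := l_min l'; rewrite /P l'_gt0 rk_l' eqxx leqNgt lt_l'l => /(_ isT).
Qed.

End Minimality.

Section Trajectories.
Variables (R : fieldType) (n m p : nat).
Variables (A : 'M[R]_n) (B : 'M[R]_(n, m)) (C : 'M[R]_(p, n)) (D : 'M[R]_(p, m)).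

Definition trajectory (x : nat -> 'cV[R]_n) (u : nat -> 'cV[R]_m) (y : nat -> 'cV[R]_p) :=
  forall t, x t.+1 = A *m x t + B *m u t /\ y t = C *m x t + D *m u t.

Definition reachable := forall xi : 'rV[R]_n, (forall i, xi *m A ^+ i *m B = 0) -> xi = 0.

Lemma trajectory_shift s x u y :
  trajectory x u y ->
  trajectory (fun t => x (t + s)%N) (fun t => u (t + s)%N) (fun t => y (t + s)%N).
Proof. by move=> Txuy t; rewrite addSn; apply: Txuy. Qed.

Definition shift_comb k c (g : 'cV[R]_c) (w : nat -> 'cV[R]_k) t :=
  \sum_(j < c) g j 0 *: w (t + j)%N.

Lemma trajectory_shift_comb c (g : 'cV[R]_c) x u y :
  trajectory x u y ->
  trajectory (shift_comb g x) (shift_comb g u) (shift_comb g y).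
Proof.
move=> Txuy t; rewrite /shift_comb !mulmx_sumr -!big_split /=.
split; apply: eq_bigr => j _; last by rewrite (Txuy _).2 scalerDr !scalemxAr.
by rewrite addSn (Txuy _).1 scalerDr !scalemxAr.
Qed.

Lemma state_unique K (x1 x2 : nat -> 'cV[R]_n) (w : 'I_K -> 'cV[R]_m) :
  x1 0%N = x2 0%N ->
  (forall t : 'I_K, x1 t.+1 = A *m x1 t + B *m w t) ->
  (forall t : 'I_K, x2 t.+1 = A *m x2 t + B *m w t) ->
  forall t, (t <= K)%N -> x1 t = x2 t.
Proof.
move=> x0 E1 E2; elim=> [//|t IH] lt_tK.
by rewrite (E1 (Ordinal lt_tK)) (E2 (Ordinal lt_tK)) /= (IH (ltnW lt_tK)).
Qed.

Lemma observable_trajectory_eq l x1 x2 u1 u2 y1 y2 :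
  observable_in A C l -> trajectory x1 u1 y1 -> trajectory x2 u2 y2 ->
  (forall t : 'I_l, u1 t = u2 t /\ y1 t = y2 t) -> x1 0%N = x2 0%N.
Proof.
move=> obs T1 T2 E12; apply/eqP; rewrite -subr_eq0; apply/eqP; apply: obs => k.
have Eu t : (t < l)%N -> u1 t = u2 t by move=> lt_tl; exact: (E12 (Ordinal lt_tl)).1.
have diff t : (t <= l)%N -> x1 t - x2 t = A ^+ t *m (x1 0%N - x2 0%N).
  elim: t => [|t IH] lt_tl; first by rewrite expr0 mul1mx.
  rewrite (T1 t).1 (T2 t).1 Eu // opprD addrACA subrr addr0.
  by rewrite -mulmxBr (IH (ltnW lt_tl)) mulmxA exprS.
have := (E12 k).2; rewrite (T1 k).2 (T2 k).2 Eu // => /addIr/eqP.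
by rewrite -subr_eq0 -mulmxBr (diff _ (ltnW (ltn_ord k))) mulmxA => /eqP.
Qed.

Lemma reachable_orth_state (xi : 'rV[R]_n) (x : nat -> 'cV[R]_n) (u : nat -> 'cV[R]_m) :
  (forall i, xi *m A ^+ i *m B = 0) -> x 0%N = 0 ->
  (forall t, x t.+1 = A *m x t + B *m u t) ->
  forall t i, xi *m A ^+ i *m x t = 0.
Proof.
move=> xiB x0 Hx; elim=> [|t IH] i; first by rewrite x0 mulmx0.
rewrite Hx mulmxDr !mulmxA xiB mul0mx addr0 -(mulmxA xi).
by rewrite -[A ^+ i *m A]/(A ^+ i * A) -exprSr IH.
Qed.

End Trajectories.

Lemma controllable_reachable (R : realType) n m p (A : 'M[R]_n) (B : 'M[R]_(n, m))
    (C : 'M[R]_(p, n)) (D : 'M[R]_(p, m)) l :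
  observable_in A C l -> controllable A B C D -> reachable A B.
Proof.
move=> obs ctrl xi xiB; apply: rowv_eq0 => x2.
have T0 : trajectory A B C D (fun _ => 0) (fun _ => 0) (fun _ => 0).
  by move=> t; rewrite !mulmx0 !addr0.
pose xfree t := A ^+ t *m x2; pose yfree t := C *m xfree t.
have Tfree : trajectory A B C D xfree (fun _ => 0) yfree.
  move=> t; rewrite !mulmx0 !addr0; split=> //.
  by rewrite /xfree exprS -mulmxE mulmxA.
have W0 : in_window A B C D (fun _ : 'I_l => 0) (fun _ => 0).
  by exists (fun _ => 0), (fun _ => 0); split; first exists (fun _ => 0).
have [u [y [T' [_ [[z Tz] [head tail]]]]]] :=
  ctrl _ _ _ W0 _ yfree (ex_intro _ xfree Tfree).
have z0 : z 0%N = 0 := observable_trajectory_eq obs Tz T0 head.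
have zT' : z (0 + (l + T'))%N = xfree 0%N.
  apply: (observable_trajectory_eq obs (trajectory_shift (l + T') Tz) Tfree) => t.
  by rewrite !addnA; apply: tail.
have := reachable_orth_state xiB z0 (fun t => (Tz t).1) (0 + (l + T')) 0.
by rewrite zT' /xfree !expr0 mulmx1 mul1mx.
Qed.

Section FundamentalLemma.
Variables (R : realType) (n m : nat) (A : 'M[R]_n) (B : 'M[R]_(n, m)).
Variables (x : nat -> 'cV[R]_n) (u : nat -> 'cV[R]_m) (L c : nat).
Hypothesis state_eq : forall t, x t.+1 = A *m x t + B *m u t.
Hypothesis reachAB : reachable A B.
Hypothesis u_pe : forall zeta : 'I_(L + n) -> 'rV[R]_m,
  (forall j, (j < c - n)%N -> \sum_(i < L + n) zeta i *m u (i + j)%N = 0) ->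
  forall i, zeta i = 0.

Section LeftKernel.
Variables (al : nat -> R) (xi : 'rV[R]_n) (eta : nat -> 'rV[R]_m).
Hypothesis al_n : al n = 1.
Hypothesis al_A : \sum_(k < n.+1) al k *: A ^+ k = 0.
Hypothesis xi_eta_ann :
  forall j, (j < c)%N -> xi *m x j + \sum_(i < L) eta i *m u (i + j)%N = 0.

(* Unrolling x (j + n) back to x j turns the relation at time j + n into one
   whose coefficient on u (j + b) is coef b. *)
Let coef b : 'rV[R]_m :=
  if (b < n)%N then xi *m A ^+ (n.-1 - b) *m B
  else if (b < n + L)%N then eta (b - n) else 0.

Lemma coef_ge b : (n + L <= b)%N -> coef b = 0.
Proof.
move=> le_b; rewrite /coef ifF; last by apply/negbTE; rewrite -leqNgt; lia.
by rewrite ifF //; apply/negbTE; rewrite -leqNgt.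
Qed.

Lemma shifted_annihilation k : (k <= n)%N -> forall j, (j + k < c)%N ->
  xi *m A ^+ k *m x j + \sum_(0 <= b < L + n) coef (b + n - k) *m u (b + j)%N = 0.
Proof.
elim: k => [|k IH] le_kn j lt_jkc.
  rewrite expr0 mulmx1 -[RHS](xi_eta_ann (j := j)); last by rewrite -(addn0 j).
  congr (_ + _).
  rewrite big_mkord (big_ord_widen (L + n) (fun b => eta b *m u (b + j)%N)) ?leq_addr //.
  rewrite [RHS]big_mkcond; apply: eq_bigr => b _ /=.
  rewrite subn0 /coef ifF; last by apply/negbTE; rewrite -leqNgt leq_addl.
  by rewrite [(n + L)%N]addnC ltn_add2r addnK; case: ifP => //; rewrite mul0mx.
have := IH (ltnW le_kn) j.+1 ltac:(lia).
have [K eK] : exists K, (L + n = K.+1)%N by exists (L + n).-1; lia.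
rewrite eK big_nat_recr //= big_nat_recl //= (coef_ge (b := (K + n - k)%N)); last by lia.
rewrite mul0mx addr0 state_eq mulmxDr !mulmxA => E; rewrite -[RHS]E.
rewrite -(mulmxA xi (A ^+ k) A) -[A ^+ k *m A]/(A ^+ k * A) -exprSr -addrA.
congr (_ + _).
have -> : coef (0 + n - k.+1)%N = xi *m A ^+ k *m B.
  rewrite /coef ifT; last by lia.
  by have -> : (n.-1 - (0 + n - k.+1) = k)%N by lia.
rewrite add0n -mulmxA; congr (_ + _); apply: eq_bigr => b _.
have -> : (b.+1 + n - k.+1 = b + n - k)%N by lia.
by rewrite addSnnS.
Qed.

(* The Cayley-Hamilton combination of the shifted relations eliminates the state. *)
Lemma input_annihilation (b : 'I_(L + n)) :
  \sum_(k < n.+1) al k *: coef (b + n - k) = 0.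
Proof.
pose zeta (b : 'I_(L + n)) := \sum_(k < n.+1) al k *: coef (b + n - k).
apply: (u_pe (zeta := zeta)) => j lt_j.
have comb0 : \sum_(k < n.+1) al k *: (xi *m A ^+ k *m x j +
    \sum_(0 <= b < L + n) coef (b + n - k) *m u (b + j)%N) = 0.
  apply: big1 => k _; have := ltn_ord k.
  by move=> lt_kn; rewrite shifted_annihilation ?scaler0 //; lia.
rewrite -[RHS]comb0; under [RHS]eq_bigr do rewrite scalerDr.
rewrite big_split /=.
have -> : \sum_(k < n.+1) al k *: (xi *m A ^+ k *m x j) = 0.
  transitivity (xi *m (\sum_(k < n.+1) al k *: A ^+ k) *m x j).
    rewrite mulmx_sumr mulmx_suml.
    by apply: eq_bigr => k _; rewrite -scalemxAr scalemxAl.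
  by rewrite al_A mulmx0 mul0mx.
rewrite add0r; under [RHS]eq_bigr do rewrite scaler_sumr.
rewrite exchange_big /= big_mkord; apply: eq_bigr => b' _.
by rewrite /zeta mulmx_suml; apply: eq_bigr => k _; rewrite scalemxAl.
Qed.

Lemma coef_eq0 b : coef b = 0.
Proof.
suff coef_down d b' : (n + L <= b' + d)%N -> coef b' = 0.
  by apply: (coef_down (n + L)%N); lia.
elim: d b' => [|d IH] b' le_b'd; first by apply: coef_ge; rewrite -(addn0 b').
have [/IH //|lt_b'd] := leqP (n + L) (b' + d).
have lt_b' : (b' < L + n)%N by lia.
have := input_annihilation (Ordinal lt_b').
rewrite big_ord_recr /= al_n scale1r addnK big1 ?add0r // => k _.
by rewrite IH ?scaler0 //; have := ltn_ord k; lia.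
Qed.

Lemma left_kernel_eq0 : xi = 0 /\ forall i, (i < L)%N -> eta i = 0.
Proof.
split=> [|i lt_iL]; last first.
  have := coef_eq0 (n + i); rewrite /coef ifF; last by apply/negbTE; lia.
  by rewrite ifT ?addKn //; lia.
apply: reachAB; apply: mulmx_pow_eq0 => i lt_in.
have := coef_eq0 (n.-1 - i); rewrite /coef ifT; last by lia.
by have -> : (n.-1 - (n.-1 - i) = i)%N by lia.
Qed.

End LeftKernel.

Lemma fundamental_lemma (x0 : 'cV[R]_n) (v : 'I_L -> 'cV[R]_m) :
  exists g : 'cV[R]_c, shift_comb g x 0 = x0 /\ forall i : 'I_L, shift_comb g u i = v i.
Proof.
pose X : 'M[R]_(n, c) := \matrix_(a, j) x j a 0.
pose H := stackmx (fun (j : 'I_c) (i : 'I_L) => u (i + j)%N).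
have freeXH : row_free (col_mx X H).
  apply: inj_row_free => w; rewrite -[w]hsubmxK mul_row_col.
  set xi := lsubmx w; set E := rsubmx w => XH0.
  pose eta i := if insub i is Some o then row o (vec_mx E) else 0.
  have etaE (o : 'I_L) : eta o = row o (vec_mx E) by rewrite /eta valK.
  have [al [al_n al_A]] := char_poly_relation A.
  have [|xi0 eta0] := left_kernel_eq0 al_n al_A (xi := xi) (eta := eta).
    move=> j lt_jc; have := congr1 (col (Ordinal lt_jc)) XH0.
    rewrite col0 colE mulmxDl -!mulmxA -!colE col_stackmx mul_vec_mx_stack.
    move=> colXH0; rewrite -[RHS]colXH0; congr (_ + _).
      by congr (_ *m _); apply/colP => a; rewrite !mxE.
    by apply: eq_bigr => i _; rewrite etaE.
  have E0 : E = 0.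
    have vecE0 : vec_mx E = 0 by apply/row_matrixP => i; rewrite row0 -etaE eta0.
    by rewrite -[E]vec_mxK vecE0 linear0.
  by rewrite xi0 E0 row_mx0.
have [g XHg] := row_free_solvable (col_mx x0 (stack v)) freeXH.
rewrite mul_col_mx in XHg; case/eq_col_mx: XHg => Xg Hg.
exists g; split.
  rewrite -Xg; apply/matrixP => a b; rewrite (ord1 b) !mxE summxE.
  by apply: eq_bigr => j _; rewrite !mxE mulrC add0n.
by move=> i; rewrite stackmx_mul in Hg; apply: (stack_inj Hg i).
Qed.

End FundamentalLemma.

Lemma at_natE (R : realType) k T (w : 'I_T -> 'cV[R]_k) t (lt_tT : (t < T)%N) :
  at_nat w t = w (Ordinal lt_tT).
Proof. by rewrite /at_nat insubT. Qed.

Lemma hankel_rows_mul (R : realType) k T (w : 'I_T -> 'cV[R]_k) (w' : nat -> 'cV[R]_k)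
    s L c (g : 'cV[R]_c) :
  (forall t : 'I_T, w t = w' t) -> (s + L + c <= T.+1)%N ->
  hankel_rows w s L c *m g = stack (fun i : 'I_L => shift_comb g w' (s + i)).
Proof.
move=> wE le_T; rewrite stackmx_mul; apply: eq_stack => i; apply: eq_bigr => j _.
have lt_T : (s + i + j < T)%N by have := ltn_ord i; have := ltn_ord j; lia.
by rewrite (at_natE _ lt_T) wE.
Qed.

Lemma pe_left_kernel (R : realType) k T (w : 'I_T -> 'cV[R]_k) (w' : nat -> 'cV[R]_k) L :
  (forall t : 'I_T, w t = w' t) -> persistently_exciting w L ->
  forall zeta : 'I_L -> 'rV[R]_k,
    (forall j, (j < T.+1 - L)%N -> \sum_(i < L) zeta i *m w' (i + j)%N = 0) ->
    forall i, zeta i = 0.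
Proof.
move=> wE pe zeta zeta0; apply: (row_free_stackmx pe) => j.
rewrite -[RHS](zeta0 j (ltn_ord j)); apply: eq_bigr => i _.
have lt_T : (0 + i + j < T)%N by have := ltn_ord i; have := ltn_ord j; lia.
by rewrite (at_natE _ lt_T) wE.
Qed.

Section DeePC.
Variables (R : realType) (n m p : nat).
Variables (A : 'M[R]_n) (B : 'M[R]_(n, m)) (C : 'M[R]_(p, n)) (D : 'M[R]_(p, m)).
Variables (N Tini T : nat) (Uset : 'cV[R]_m -> Prop) (Yset : 'cV[R]_p -> Prop).
Variables (uini : 'I_Tini -> 'cV[R]_m) (yini : 'I_Tini -> 'cV[R]_p).
Variables (ud : 'I_T -> 'cV[R]_m) (yd : 'I_T -> 'cV[R]_p).
Variables (xini : nat -> 'cV[R]_n) (uini' : nat -> 'cV[R]_m) (yini' : nat -> 'cV[R]_p).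
Variables (xd : nat -> 'cV[R]_n) (ud' : nat -> 'cV[R]_m) (yd' : nat -> 'cV[R]_p).
Hypothesis ini_traj : trajectory A B C D xini uini' yini'.
Hypothesis ini_win : forall t : 'I_Tini, uini t = uini' t /\ yini t = yini' t.
Hypothesis data_traj : trajectory A B C D xd ud' yd'.
Hypothesis data_win : forall t : 'I_T, ud t = ud' t /\ yd t = yd' t.
Hypothesis obs : observable_in A C Tini.
Hypothesis le_LT : (Tini + N <= T.+1)%N.

Let c := (T.+1 - (Tini + N))%N.

Hypothesis data_rich : forall (x0 : 'cV[R]_n) (v : 'I_(Tini + N) -> 'cV[R]_m),
  exists g : 'cV[R]_c,
    shift_comb g xd 0 = x0 /\ forall i : 'I_(Tini + N), shift_comb g ud' i = v i.

Lemma deepc_hankelE (g : 'cV[R]_c) :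
  [/\ hankel_rows ud 0 Tini c *m g = stack (fun i : 'I_Tini => shift_comb g ud' i),
      hankel_rows yd 0 Tini c *m g = stack (fun i : 'I_Tini => shift_comb g yd' i),
      hankel_rows ud Tini N c *m g = stack (fun k : 'I_N => shift_comb g ud' (Tini + k)) &
      hankel_rows yd Tini N c *m g = stack (fun k : 'I_N => shift_comb g yd' (Tini + k))].
Proof.
have le_ini : (0 + Tini + c <= T.+1)%N by rewrite /c; lia.
have le_f : (Tini + N + c <= T.+1)%N by rewrite /c; lia.
have ud_win t := (data_win t).1; have yd_win t := (data_win t).2.
by split; apply: hankel_rows_mul.
Qed.

Lemma mpc_feasible_deepc (u : 'I_N -> 'cV[R]_m) (y : 'I_N -> 'cV[R]_p) :
  mpc_feasible A B C D Uset Yset (xini Tini) u y ->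
  deepc_feasible ud yd uini yini Uset Yset u y.
Proof.
case=> xm [xm0 Hxm].
pose v (i : 'I_(Tini + N)) := match split i with inl a => uini' a | inr k => u k end.
have [g [z0 uzE]] := data_rich (xini 0%N) v.
have Tz := trajectory_shift_comb g data_traj.
set z := shift_comb g xd in z0 Tz; set uz := shift_comb g ud' in uzE Tz.
set yz := shift_comb g yd' in Tz.
have uz_ini (a : 'I_Tini) : uz a = uini' a.
  by have := uzE (unsplit (inl a)); rewrite /v unsplitK.
have uz_f (k : 'I_N) : uz (Tini + k)%N = u k.
  by have := uzE (unsplit (inr k)); rewrite /v unsplitK.
have z_ini : forall t, (t <= Tini)%N -> z t = xini t.
  apply: (state_unique (w := fun a => uini' a)) => // a; last exact: (ini_traj a).1.
  by rewrite (Tz a).1 uz_ini.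
have z_f : forall t, (t <= N)%N -> z (Tini + t)%N = xm t.
  apply: (state_unique (w := u)) => [|k|k]; last exact: (Hxm k).1.
    by rewrite addn0 z_ini // xm0.
  by rewrite addnS (Tz _).1 uz_f.
exists g; have [-> -> -> ->] := deepc_hankelE g; rewrite -/uz -/yz.
split; [|split; [|split; [|split]]].
- by apply: eq_stack => a; rewrite uz_ini (ini_win a).1.
- apply: eq_stack => a; rewrite (ini_win a).2 (Tz a).2 (ini_traj a).2 uz_ini.
  by rewrite (z_ini _ (ltnW (ltn_ord a))).
- exact: eq_stack uz_f.
- apply: eq_stack => k; rewrite (Tz _).2 uz_f (z_f _ (ltnW (ltn_ord k))).
  by rewrite (Hxm k).2.1.
- by move=> k; have [_ [_ UYk]] := Hxm k.
Qed.

Lemma deepc_feasible_mpc (u : 'I_N -> 'cV[R]_m) (y : 'I_N -> 'cV[R]_p) :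
  deepc_feasible ud yd uini yini Uset Yset u y ->
  mpc_feasible A B C D Uset Yset (xini Tini) u y.
Proof.
case=> g; have [-> -> -> ->] := deepc_hankelE g.
case=> /stack_inj uz_ini [/stack_inj yz_ini [/stack_inj uz_f [/stack_inj yz_f UY]]].
have Tz := trajectory_shift_comb g data_traj.
set z := shift_comb g xd in Tz; set uz := shift_comb g ud' in Tz uz_ini uz_f.
set yz := shift_comb g yd' in Tz yz_ini yz_f.
have z0 : z 0%N = xini 0%N.
  apply: (observable_trajectory_eq obs Tz ini_traj) => a.
  by rewrite -(ini_win a).1 -(ini_win a).2 uz_ini yz_ini.
have z_ini : forall t, (t <= Tini)%N -> z t = xini t.
  apply: (state_unique (w := fun a => uini' a)) => // a; last exact: (ini_traj a).1.
  by rewrite (Tz a).1 uz_ini (ini_win a).1.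
exists (fun k => z (Tini + k)%N); split; first by rewrite addn0 z_ini.
move=> k; split; [|split; [|exact: UY]].
  by rewrite addnS (Tz _).1 uz_f.
by rewrite -yz_f (Tz _).2 uz_f.
Qed.

End DeePC.

Theorem theorem1 (R : realType) (n m p : nat)
    (A : 'M[R]_n) (B : 'M[R]_(n, m)) (C : 'M[R]_(p, n)) (D : 'M[R]_(p, m))
    (N Tini T : nat)
    (uini : 'I_Tini -> 'cV[R]_m) (yini : 'I_Tini -> 'cV[R]_p)
    (ud : 'I_T -> 'cV[R]_m) (yd : 'I_T -> 'cV[R]_p)
    (Uset : 'cV[R]_m -> Prop) (Yset : 'cV[R]_p -> Prop) :
  minimal_repr A B C D ->
  controllable A B C D ->
  (0 < N)%N -> (0 < Tini)%N -> (0 < T)%N ->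
  (forall l, is_lag A C l -> (l <= Tini)%N) ->
  ((m + 1) * (Tini + N + n) - 1 <= T)%N ->
  in_window A B C D uini yini ->
  in_window A B C D ud yd ->
  persistently_exciting ud (Tini + N + n) ->
  exists xhat : 'cV[R]_n,
    forall (u : 'I_N -> 'cV[R]_m) (y : 'I_N -> 'cV[R]_p),
      mpc_feasible A B C D Uset Yset xhat u y <->
      deepc_feasible ud yd uini yini Uset Yset u y.
Proof.
move=> minABCD ctrl _ _ _ lag_le le_T [uini' [yini' [[xini ini_traj] ini_win]]]
  [ud' [yd' [[xd data_traj] data_win]]] pe.
have obs := lag_observable minABCD lag_le.
have reachAB := controllable_reachable obs ctrl.
have u_pe := pe_left_kernel (fun t => (data_win t).1) pe.
rewrite subnDA in u_pe.
have data_rich := fundamental_lemma (fun t => (data_traj t).1) reachAB u_pe.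
have le_LT : (Tini + N <= T.+1)%N by nia.
exists (xini Tini) => u y; split.
  exact: (mpc_feasible_deepc ini_traj ini_win data_traj data_win le_LT data_rich).
exact: (deepc_feasible_mpc ini_traj ini_win data_traj data_win obs le_LT).
Qed.
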